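(* In any graph $G$, every nice stable set is a strong stable set.
   Context: A stable set is a set of pairwise non-adjacent vertices. A strong stable set is a stable set meeting every maximal (by inclusion) clique of $G$. Contracting vertices $x_1,\dots,x_k$ means deleting them and adding a new vertex adjacent to every remaining vertex that is adjacent to at least one of $x_1,\dots,x_k$. A nice stable set is a maximal (by inclusion) stable set $S$ together with a linear ordering $s_1,\dots,s_k$ of its elements such that for every $i\in\{2,\dots,k\}$, in the graph obtained from $G$ by contracting $s_1,\dots,s_{i-1}$ into a new vertex $w_{i-1}$, there is no induced path on four vertices with endpoints $w_{i-1}$ and $s_i$ (i.e. no chordless path $w_{i-1}$-$a$-$b$-$s_i$). *)

(* A simple graph on vertex set V : {set U} (U : finType)
   with adjacency r : rel U (only its restriction to V matters). *)
From mathcomp Require Import all_boot.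
Set Implicit Arguments. Unset Strict Implicit. Unset Printing Implicit Defensive.

Section Graphs.
Variable U : finType.
Variable r : rel U.

Definition stable (A : {set U}) : bool :=
  [forall x in A, forall y in A, ~~ r x y].

Definition clique (A : {set U}) : bool :=
  [forall x in A, forall y in A, (x != y) ==> r x y].

Definition induced_P4 (V : {set U}) (p1 p2 p3 p4 : U) : bool :=
  [&& p1 \in V, p2 \in V, p3 \in V, p4 \in V,
      uniq [:: p1; p2; p3; p4],
      [&& r p1 p2, r p2 p3 & r p3 p4] &
      [&& ~~ r p1 p3, ~~ r p1 p4 & ~~ r p2 p4]].

Definition has_induced_P4_ends (V : {set U}) (x y : U) : bool :=
  [exists a, exists b, induced_P4 V x a b y].
End Graphs.

Section Contraction.
Variable T : finType.
Variable e : rel T.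

(* Contraction of the vertices of X (in the graph with vertex set [set: T]):
   vertex type option T, where None is the new vertex w and Some v is an
   old vertex v. *)
Definition contr_vertices (X : {set T}) : {set option T} :=
  None |: [set Some v | v in ~: X].

Definition contr_rel (X : {set T}) : rel (option T) :=
  fun u v =>
    match u, v with
    | Some x, Some y => e x y
    | None, Some y => [exists x in X, e x y]
    | Some y, None => [exists x in X, e x y]
    | None, None => false
    end.
End Contraction.

Definition maximal_stable (T : finType) (e : rel T) (S : {set T}) : bool :=
  maxset (stable e) S.
Definition maximal_clique (T : finType) (e : rel T) (K : {set T}) : bool :=
  maxset (clique e) K.

Definition strong_stable (T : finType) (e : rel T) (S : {set T}) : Prop :=
  stable e S /\ forall K : {set T}, maximal_clique e K -> S :&: K != set0.

(* nice stable set: S maximal stable, with a linear ordering s = s_1..s_k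
   (a duplicate-free sequence enumerating S) such that for every
   i in {2..k} (0-based index i in 1..k-1), in the graph obtained by
   contracting s_1..s_{i-1} (= take i s) into w (= None), there is no induced
   P4 with endpoints w and s_i (= Some (nth _ s i)). *)
Definition nice_stable (T : finType) (e : rel T) (S : {set T}) : Prop :=
  maximal_stable e S /\
  exists s : seq T,
    [/\ uniq s, S = [set x in s] &
        forall (i : nat) (x0 : T), 0 < i < size s ->
          ~~ has_induced_P4_ends (contr_rel e [set x in take i s])
               (contr_vertices [set x in take i s]) None (Some (nth x0 s i))].

(* Suppose a maximal clique K misses the nice stable set S = s_1 .. s_k.  Every
   vertex of K has a neighbour in S; pick v in K whose first neighbour s_j in
   the order comes as late as possible.  As s_j is not in K, maximality of K
   gives u in K not adjacent to s_j, and the first neighbour of u comes before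
   s_j.  After contracting s_1 .. s_(j-1) into w, the path w - u - v - s_j is
   induced (w sees u but neither v nor s_j, the latter because S is stable),
   against niceness. *)
From mathcomp Require Import all_boot.

Set Implicit Arguments.
Unset Strict Implicit.
Unset Printing Implicit Defensive.

Lemma nth_notin_take (T : eqType) (x0 : T) (s : seq T) j :
  uniq s -> j < size s -> nth x0 s j \notin take j s.
Proof. by move=> us js; rewrite in_take ?mem_nth // index_uniq ?ltnn. Qed.

Section NiceStable.

Variables (T : finType) (e : rel T).

Lemma stableP (A : {set T}) :
  reflect {in A &, forall x y, ~~ e x y} (stable e A).
Proof.
apply: (iffP forall_inP) => [H x y xA yA | H x xA].
  exact: (forall_inP (H x xA)).
by apply/forall_inP => y yA; apply: H.
Qed.

Lemma cliqueP (A : {set T}) :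
  reflect {in A &, forall x y, x != y -> e x y} (clique e A).
Proof.
apply: (iffP forall_inP) => [H x y xA yA | H x xA].
  exact/implyP/(forall_inP (H x xA)).
by apply/forall_inP => y yA; apply/implyP/H.
Qed.

Hypotheses (e_sym : symmetric e) (e_irr : irreflexive e).

Lemma maximal_stable_adj (S : {set T}) x :
  maximal_stable e S -> x \notin S -> exists2 y, y \in S & e x y.
Proof.
case/maxsetP=> /stableP stS maxS xS.
apply/exists_inP; apply: contraNT xS => /exists_inPn xS.
have stxS : stable e (x |: S).
  apply/stableP => a b /setU1P[-> | aS] /setU1P[-> | bS]; rewrite ?e_irr //.
  - exact: xS.
  - by rewrite e_sym xS.
  - exact: stS.
by rewrite -(maxS _ stxS (subsetUr _ _)) setU11.
Qed.

Lemma maximal_clique_nonadj (K : {set T}) x :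
  maximal_clique e K -> x \notin K -> exists2 u, u \in K & ~~ e x u.
Proof.
case/maxsetP=> /cliqueP clK maxK xK.
apply/exists_inP; apply: contraNT xK; rewrite negb_exists_in => /forall_inP xK.
have clxK : clique e (x |: K).
  apply/cliqueP => a b /setU1P[-> | aK] /setU1P[-> | bK]; rewrite ?eqxx // => ab.
  - by have := xK b bK; rewrite negbK.
  - by have := xK a aK; rewrite negbK e_sym.
  - exact: clK.
by rewrite -(maxK _ clxK (subsetUr _ _)) setU11.
Qed.

Lemma maximal_clique_neq0 (K : {set T}) :
  0 < #|T| -> maximal_clique e K -> K != set0.
Proof.
case/card_gt0P=> x _ mK; apply/set0Pn.
case xK: (x \in K); first by exists x.
by have [u uK _] := maximal_clique_nonadj mK (negbT xK); exists u.
Qed.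

Lemma mem_contr_vertices (X : {set T}) y :
  (Some y \in contr_vertices X) = (y \notin X).
Proof.
rewrite /contr_vertices !inE /=.
by apply/imsetP/idP => [[z zX [->]] | yX]; [rewrite inE in zX | exists y; rewrite ?inE].
Qed.

Lemma contr_induced_P4 (X : {set T}) u v y :
  u \notin X -> v \notin X -> y \notin X ->
  e u v -> e v y -> ~~ e u y ->
  contr_rel e X None (Some u) -> ~~ contr_rel e X None (Some v) ->
  ~~ contr_rel e X None (Some y) ->
  has_induced_P4_ends (contr_rel e X) (contr_vertices X) None (Some y).
Proof.
move=> uX vX yX euv evy nuy wu nwv nwy.
have neq_uv : u != v by apply: contraNneq nwv => <-.
have neq_uy : u != y by apply: contraNneq nwy => <-.
have neq_vy : v != y by apply: contraTneq evy => ->; rewrite e_irr.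
apply/existsP; exists (Some u); apply/existsP; exists (Some v).
rewrite /induced_P4 !mem_contr_vertices uX vX yX /contr_vertices setU11 /=.
move: wu nwv nwy; rewrite /contr_rel => -> -> ->.
by rewrite !inE /= !(inj_eq Some_inj) negb_or neq_uv neq_uy neq_vy euv evy nuy.
Qed.

Lemma contr_prefix_adj (s : seq T) j y :
  contr_rel e [set x in take j s] None (Some y) = has (e y) (take j s).
Proof.
apply/exists_inP/hasP => [[x] | [x xs eyx]].
  by rewrite inE => xs exy; exists x; rewrite // e_sym.
by exists x; rewrite ?inE // e_sym.
Qed.

Lemma maximal_clique_disjoint_P4 (s : seq T) (K : {set T}) (x0 : T) :
  uniq s -> maximal_stable e [set x in s] -> maximal_clique e K ->
  K != set0 -> [disjoint [set x in s] & K] ->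
  exists2 j, 0 < j < size s &
    has_induced_P4_ends (contr_rel e [set x in take j s])
      (contr_vertices [set x in take j s]) None (Some (nth x0 s j)).
Proof.
move=> us mS mK /set0Pn[z zK] dSK.
have notin_s x : x \in K -> x \notin s.
  by move=> xK; have := disjointFl dSK xK; rewrite inE => ->.
have has_adj x : x \in K -> has (e x) s.
  move=> xK; have [y ys exy] := maximal_stable_adj mS (negbT (disjointFl dSK xK)).
  by apply/hasP; exists y; rewrite // inE in ys.
pose first_adj x := find (e x) s.
have [v vK first_max] := arg_maxnP first_adj zK.
set j := first_adj v; set y := nth x0 s j.
have js : j < size s by rewrite -has_find has_adj.
have evy : e v y by apply: nth_find; apply: has_adj.
have yK : y \notin K.
  by apply: contraTN (mem_nth x0 js) => /notin_s.
have [u uK nuy] := maximal_clique_nonadj mK yK.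
rewrite e_sym in nuy.
have uj : first_adj u < j.
  have le_uj : first_adj u <= j := first_max u uK.
  rewrite ltn_neqAle le_uj andbT; apply: contraNneq nuy => uE.
  by rewrite /y -uE nth_find ?has_adj.
have euv : e u v.
  have [/cliqueP clK _] := maxsetP mK.
  by apply: clK => //; apply: contraNneq nuy => ->.
exists j; first by rewrite js (leq_ltn_trans _ uj).
apply: (contr_induced_P4 (u := u) (v := v)) => //; rewrite ?contr_prefix_adj.
- by rewrite inE; apply: contra (notin_s u uK); apply: mem_take.
- by rewrite inE; apply: contra (notin_s v vK); apply: mem_take.
- by rewrite inE nth_notin_take.
- by rewrite has_take ?has_adj.
- by rewrite has_take ?has_adj // ltnn.
- have [/stableP stS _] := maxsetP mS.
  by apply/hasPn => x /mem_take xs; apply: stS; rewrite inE // mem_nth.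
Qed.

End NiceStable.

Theorem lemma3 (T : finType) (e : rel T)
  (e_sym : symmetric e) (e_irr : irreflexive e) (T_nonempty : 0 < #|T|)
  (S : {set T}) :
  nice_stable e S -> strong_stable e S.
Proof.
case=> mS [s [us defS nice]]; split; first by case/maxsetP: mS.
move=> K mK; rewrite setI_eq0; apply/negP => dSK.
rewrite defS in mS dSK.
have [x0 _] := card_gt0P T_nonempty.
have K0 := maximal_clique_neq0 e_sym T_nonempty mK.
have [j js P4] := maximal_clique_disjoint_P4 e_sym e_irr x0 us mS mK K0 dSK.
by have := nice j x0 js; rewrite P4.
Qed.
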